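(* Let $f(t)=\sum_{i=0}^m a_it^i\in D[t;\sigma]$ be monic of degree $m\ge 2$ with $a_0\neq0$. Then for every $j\in\{1,\dots,m-1\}$, the left multiplication $L_{t^j}:S_f\to S_f$, $x\mapsto t^j\circ x$, is surjective if and only if $\sigma$ is surjective. In particular, if $\sigma$ is not surjective then $S_f$ is not a left division algebra.
   Context: $D$ is an associative division ring and $\sigma$ a ring endomorphism of $D$. $D[t;\sigma]$ is the skew polynomial ring with $ta=\sigma(a)t$. For monic $f$ of degree $m$, $S_f$ is the set of polynomials of degree $<m$ with multiplication $g\circ h=$ remainder of $gh$ upon right division by $f$ ($gh=qf+r$ with $\deg r<m$). $S_f$ is a left division algebra if $L_a(x)=a\circ x$ is bijective for every nonzero $a\in S_f$. *)

From HB Require Import structures.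
From mathcomp Require Import all_boot all_order all_algebra.
Set Implicit Arguments. Unset Strict Implicit. Unset Printing Implicit Defensive.
Import GRing.Theory.
Local Open Scope ring_scope.

(* Skew polynomial ring D[t; sigma], with t a = sigma(a) t.
   Elements are represented by their coefficient lists, i.e. by {poly D}
   (as an additive group); the multiplication is the skew one below. *)

Section Skew.
Variable D : unitRingType.
Variable sigma : {rmorphism D -> D}.

Definition sigma_iter (i : nat) (x : D) : D := iter i sigma x.

(* (sum_i p_i t^i)(sum_j q_j t^j) = sum_k (sum_{i<=k} p_i sigma^i(q_{k-i})) t^k *)
Definition skew_mul (p q : {poly D}) : {poly D} :=
  \poly_(k < (size p + size q).-1)
     \sum_(i < k.+1) p`_i * sigma_iter i q`_(k - i).

(* Remainder of right division by f (f monic): g = q f + r, size r < size f.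
   Computed by repeatedly subtracting lead(g) t^(deg g - deg f) * f. *)
Fixpoint skew_rmod_aux (f : {poly D}) (n : nat) (g : {poly D}) : {poly D} :=
  match n with
  | 0 => g
  | n'.+1 =>
      if (size g < size f)%N then g
      else skew_rmod_aux f n'
             (g - skew_mul (lead_coef g *: 'X^(size g - size f)) f)
  end.

Definition skew_rmod (f g : {poly D}) : {poly D} := skew_rmod_aux f (size g) g.

Definition Sf_mul (f g h : {poly D}) : {poly D} := skew_rmod f (skew_mul g h).

Definition in_Sf (f x : {poly D}) : Prop := (size x < size f)%N.

Definition L_surjective (f a : {poly D}) : Prop :=
  forall y, in_Sf f y -> exists2 x, in_Sf f x & Sf_mul f a x = y.

Definition L_bijective (f a : {poly D}) : Prop :=
  L_surjective f a /\
  (forall x1 x2, in_Sf f x1 -> in_Sf f x2 -> Sf_mul f a x1 = Sf_mul f a x2 -> x1 = x2).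

Definition left_division_algebra (f : {poly D}) : Prop :=
  forall a, in_Sf f a -> a != 0 -> L_bijective f a.

End Skew.

Definition surjective_fun (A B : Type) (g : A -> B) : Prop := forall b, exists a, g a = b.

From HB Require Import structures.
From mathcomp Require Import all_boot all_order all_algebra.
From mathcomp Require Import zify.
Set Implicit Arguments. Unset Strict Implicit. Unset Printing Implicit Defensive.
Import GRing.Theory.
Local Open Scope ring_scope.

(* For x of degree < m, t x = sigma(x) t has degree <= m and its reduction
   modulo f is  t o x = sigma(x) t - sigma(x_(m-1)) f.  Its constant coefficient
   is -sigma(x_(m-1)) a_0, so if L_t is onto then, a_0 being invertible, every
   b is sigma(x_(m-1)) for a suitable x.  Conversely, given y, the choice
   c = -y_0 a_0^-1 makes y + c f divisible by t, and a coefficientwise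
   sigma-preimage of (y + c f) / t is a solution of t o x = y.  Finally
   L_(t^j) = (L_t)^j, because reduction modulo f commutes with left
   multiplication by t; hence L_(t^j) is onto exactly when L_t is (j >= 1). *)

Lemma map_poly_surjective (R S : nzRingType) (g : {additive R -> S}) :
  surjective_fun g ->
  forall p : {poly S}, exists2 q : {poly R}, (size q <= size p)%N & map_poly g q = p.
Proof.
move=> g_surj p; have g_surjb b : exists a, g a == b by have [a <-] := g_surj b; exists a.
exists (\poly_(i < size p) xchoose (g_surjb p`_i)); first exact: size_poly.
apply/polyP => i; rewrite coef_map coef_poly.
case: ltnP => [_ | le_p_i]; last by rewrite raddf0 nth_default.
exact/eqP/(xchooseP (g_surjb p`_i)).
Qed.

Section SkewPolynomials.
Variables (D : unitRingType) (sigma : {rmorphism D -> D}).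

Lemma sigma_iterS i x : sigma_iter sigma i.+1 x = sigma (sigma_iter sigma i x).
Proof. by []. Qed.

Lemma sigma_iter0 i : sigma_iter sigma i 0 = 0.
Proof. by elim: i => // i IH; rewrite sigma_iterS IH rmorph0. Qed.

Lemma sigma_iter1 i : sigma_iter sigma i 1 = 1.
Proof. by elim: i => // i IH; rewrite sigma_iterS IH rmorph1. Qed.

Lemma coef_skew_mul p q k :
  (skew_mul sigma p q)`_k = \sum_(i < k.+1) p`_i * sigma_iter sigma i q`_(k - i).
Proof.
rewrite coef_poly; case: ltnP => // le_pq_k; symmetry; apply: big1 => i _.
have [lt_i_p | le_p_i] := ltnP i (size p); last by rewrite nth_default ?mul0r.
rewrite [q`_ _]nth_default ?sigma_iter0 ?mulr0 //.
by move: le_pq_k lt_i_p; case: i => i /= _; lia.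
Qed.

Lemma skew_mul0l q : skew_mul sigma 0 q = 0.
Proof.
by apply/polyP => k; rewrite coef_skew_mul coef0 big1 // => i; rewrite coef0 mul0r.
Qed.

Lemma skew_mulDl p p' q :
  skew_mul sigma (p + p') q = skew_mul sigma p q + skew_mul sigma p' q.
Proof.
apply/polyP => k; rewrite coefD !coef_skew_mul -big_split.
by apply: eq_bigr => i _; rewrite coefD mulrDl.
Qed.

Lemma skew_mulBl p p' q :
  skew_mul sigma (p - p') q = skew_mul sigma p q - skew_mul sigma p' q.
Proof.
apply/polyP => k; rewrite coefB !coef_skew_mul -sumrB.
by apply: eq_bigr => i _; rewrite coefB mulrBl.
Qed.

Lemma skew_mulZl c p q : skew_mul sigma (c *: p) q = c *: skew_mul sigma p q.
Proof.
apply/polyP => k; rewrite coefZ !coef_skew_mul mulr_sumr.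
by apply: eq_bigr => i _; rewrite coefZ mulrA.
Qed.

Lemma skew_mulXnl n p : skew_mul sigma 'X^n p = map_poly (sigma_iter sigma n) p * 'X^n.
Proof.
apply/polyP => k; rewrite coef_skew_mul coefMXn.
rewrite (eq_bigr (fun i : 'I_k.+1 =>
    if i == n :> nat then sigma_iter sigma n p`_(k - n) else 0)); last first.
  by move=> i _; rewrite coefXn; case: eqP => [-> | _]; rewrite ?mul1r ?mul0r.
rewrite -big_mkcond /= (big_ord1_eq _ (fun=> sigma_iter sigma n p`_(k - n))) ltnS.
by case: leqP => // _; rewrite coef_map_id0 // sigma_iter0.
Qed.

Lemma skew_mulXl p : skew_mul sigma 'X p = map_poly sigma p * 'X.
Proof. by rewrite -['X]expr1 skew_mulXnl. Qed.

Lemma skew_mul1l p : skew_mul sigma 1 p = p.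
Proof. by rewrite -(expr0 'X) skew_mulXnl mulr1 map_poly_id. Qed.

Lemma skew_mulXA p q :
  skew_mul sigma (skew_mul sigma 'X p) q = skew_mul sigma 'X (skew_mul sigma p q).
Proof.
rewrite !skew_mulXl; apply/polyP => -[|k]; rewrite coef_skew_mul coefMX //=.
  by rewrite big_ord1 coefMX mul0r.
rewrite big_ord_recl coefMX mul0r add0r coef_map coef_skew_mul raddf_sum.
by apply: eq_bigr => i _; rewrite coefMX coef_map /= rmorphM.
Qed.

Lemma skew_mulXS n p :
  skew_mul sigma 'X^(n.+1) p = skew_mul sigma 'X (skew_mul sigma 'X^n p).
Proof. by rewrite -skew_mulXA [skew_mul _ 'X _]skew_mulXl map_polyXn exprSr. Qed.

Lemma coef_skew_mul_last p q :
  (skew_mul sigma p q)`_((size p).-1 + (size q).-1) =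
  lead_coef p * sigma_iter sigma (size p).-1 (lead_coef q).
Proof.
rewrite coef_skew_mul.
have lt_p_k : ((size p).-1 < ((size p).-1 + (size q).-1).+1)%N by lia.
rewrite (bigD1 (Ordinal lt_p_k)) //= addKn big1 ?addr0 // => -[i lt_i_k] /= ne_ip.
have {}ne_ip : i != (size p).-1 by apply: contraNneq ne_ip => eq_ip; apply/eqP/val_inj.
have [lt_i_p | le_p_i] := ltnP i (size p); last by rewrite nth_default ?mul0r.
rewrite [q`_ _]nth_default ?sigma_iter0 ?mulr0 //.
(* [size p] occurs at convertible but syntactically different types, which [lia]
   would take for distinct atoms; generalizing it first identifies them. *)
by move: ne_ip lt_i_p => /eqP; move: (size p) (size q) => a b; lia.
Qed.

End SkewPolynomials.

Section RightDivision.
Variables (D : unitRingType) (sigma : {rmorphism D -> D}) (f : {poly D}).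
Hypothesis f_monic : f \is monic.

Lemma size_monic_gt0 : (0 < size f)%N.
Proof. by rewrite size_poly_gt0 monic_neq0. Qed.

Lemma coef_monic_last : f`_(size f).-1 = 1.
Proof. exact/monicP. Qed.

Lemma size_skew_mul_monic q : q != 0 ->
  size (skew_mul sigma q f) = ((size q).-1 + size f)%N.
Proof.
move=> q_neq0; have f_gt0 := size_monic_gt0.
have q_gt0 : (0 < size q)%N by rewrite size_poly_gt0.
apply/anti_leq/andP; split.
  apply: leq_trans (size_poly _ _) _.
  by move: f_gt0 q_gt0; move: (size f) (size q) => a b; lia.
have: (skew_mul sigma q f)`_((size q).-1 + (size f).-1) != 0.
  by rewrite coef_skew_mul_last (monicP f_monic) sigma_iter1 mulr1 lead_coef_eq0.
apply: contraR; rewrite -ltnNge => lt_qf.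
have le_qf : (size (skew_mul sigma q f) <= (size q).-1 + (size f).-1)%N.
  by move: f_gt0 lt_qf; move: (size f) => a; lia.
by rewrite (leq_sizeP _ _ le_qf).
Qed.

Lemma skew_rmod_auxP n (g : {poly D}) : (size g <= n)%N ->
  exists2 Q, g = skew_mul sigma Q f + skew_rmod_aux sigma f n g
           & (size (skew_rmod_aux sigma f n g) < size f)%N.
Proof.
have f_gt0 := size_monic_gt0.
elim: n g => [|n IH] g /= le_g_n.
  move: le_g_n; rewrite leqn0 size_poly_eq0 => /eqP ->.
  by exists 0; rewrite ?skew_mul0l ?add0r ?size_poly0.
have [lt_g_f | le_f_g] := ltnP (size g) (size f).
  by exists 0; rewrite ?skew_mul0l ?add0r.
set d := (size g - size f)%N; set h := lead_coef g *: 'X^d.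
have le_gh_n : (size (g - skew_mul sigma h f)%R <= n)%N.
  apply: (@leq_trans (size g).-1); last by move: le_g_n; move: (size g) => a; lia.
  apply/leq_sizeP => k le_g_k.
  rewrite coefB skew_mulZl skew_mulXnl coefZ coefMXn coef_map_id0 ?sigma_iter0 //.
  have le_d_k : (d <= k)%N.
    by rewrite /d; move: f_gt0 le_g_k; move: (size g) (size f) => a b; lia.
  rewrite ltnNge le_d_k /=.
  have [lt_k_g | le_g_k'] := ltnP k (size g).
    have -> : k = (size g).-1 by move: le_g_k lt_k_g; move: (size g) => a; lia.
    have -> : ((size g).-1 - d = (size f).-1)%N.
      by rewrite /d; move: f_gt0 le_f_g; move: (size g) (size f) => a b; lia.
    by rewrite coef_monic_last sigma_iter1 mulr1 subrr.
  rewrite !nth_default ?sigma_iter0 ?mulr0 ?subrr //.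
  by rewrite /d; move: le_f_g le_g_k'; move: (size g) (size f) => a b; lia.
have [Q eq_g lt_r_f] := IH _ le_gh_n.
by exists (h + Q); rewrite // skew_mulDl -addrA -eq_g addrC subrK.
Qed.

Lemma skew_rmodP g :
  exists2 Q, g = skew_mul sigma Q f + skew_rmod sigma f g
           & (size (skew_rmod sigma f g) < size f)%N.
Proof. exact: skew_rmod_auxP. Qed.

Lemma skew_rmod_eq g Q r : g = skew_mul sigma Q f + r -> (size r < size f)%N ->
  skew_rmod sigma f g = r.
Proof.
move=> eq_g lt_r_f; have [Q' eq_g' lt_r'_f] := skew_rmodP g.
have eq_QQ' : skew_mul sigma (Q - Q') f = skew_rmod sigma f g - r.
  rewrite skew_mulBl.
  have -> : skew_mul sigma Q f = g - r by rewrite eq_g addrK.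
  have -> : skew_mul sigma Q' f = g - skew_rmod sigma f g by rewrite {1}eq_g' addrK.
  by rewrite opprB addrC addrA subrK.
have QQ'0 : Q - Q' = 0.
  apply: contraTeq (size_polyD (skew_rmod sigma f g) (- r)) => ne_QQ'.
  rewrite -eq_QQ' size_skew_mul_monic // size_polyN -ltnNge gtn_max.
  by apply/andP; split; apply: leq_trans (leq_addl _ _).
by move: eq_QQ'; rewrite QQ'0 skew_mul0l => /eqP; rewrite eq_sym subr_eq0 => /eqP.
Qed.

End RightDivision.

Section PetitAlgebra.
Variables (D : unitRingType) (sigma : {rmorphism D -> D}) (f : {poly D}).
Hypothesis f_monic : f \is monic.

Lemma Sf_mul_in a x : in_Sf f (Sf_mul sigma f a x).
Proof. by have [] := skew_rmodP sigma f_monic (skew_mul sigma a x). Qed.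

Lemma Sf_mul1l x : in_Sf f x -> Sf_mul sigma f 1 x = x.
Proof.
move=> x_in; apply: (skew_rmod_eq f_monic (Q := 0)) => //.
by rewrite skew_mul0l add0r skew_mul1l.
Qed.

Lemma Sf_mulXS n x :
  Sf_mul sigma f 'X^(n.+1) x = Sf_mul sigma f 'X (Sf_mul sigma f 'X^n x).
Proof.
rewrite /Sf_mul; have [Q] := skew_rmodP sigma f_monic (skew_mul sigma 'X^n x).
move: (skew_rmod _ _ _) => r eq_Xnx _.
have [Q' eq_Xr lt_r'_f] := skew_rmodP sigma f_monic (skew_mul sigma 'X r).
apply: (skew_rmod_eq f_monic (Q := skew_mul sigma 'X Q + Q')) => //.
rewrite skew_mulXS eq_Xnx skew_mulDl -addrA -eq_Xr skew_mulXA.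
by rewrite !skew_mulXl raddfD mulrDl.
Qed.

Lemma L_surjective_X_of_XSn n : L_surjective sigma f 'X^(n.+1) -> L_surjective sigma f 'X.
Proof.
move=> surjXn y /surjXn[x _ <-]; rewrite Sf_mulXS.
by exists (Sf_mul sigma f 'X^n x); first exact: Sf_mul_in.
Qed.

Lemma L_surjective_Xn n : L_surjective sigma f 'X -> L_surjective sigma f 'X^n.
Proof.
move=> surjX; elim: n => [|n IH] y y_in; first by exists y; rewrite ?expr0 ?Sf_mul1l.
have [z z_in <-] := surjX y y_in; have [x x_in <-] := IH z z_in.
by exists x; rewrite ?Sf_mulXS.
Qed.

Hypothesis f_size_gt1 : (1 < size f)%N.

Lemma Sf_mulXl x : in_Sf f x ->
  Sf_mul sigma f 'X x = map_poly sigma x * 'X - sigma x`_(size f).-2 *: f.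
Proof.
move=> x_in; set c := sigma _.
apply: (skew_rmod_eq f_monic (Q := c%:P)).
  by rewrite skew_mulXl -(mulr1 c%:P) mul_polyC skew_mulZl skew_mul1l addrC subrK.
have le_r_f : (size (map_poly sigma x * 'X - c *: f)%R <= (size f).-1)%N.
  apply/leq_sizeP => k; rewrite leq_eqVlt => /orP[/eqP <- | lt_f_k].
    rewrite coefB coefZ coefMX coef_map coef_monic_last // mulr1.
    by rewrite ifN ?subrr //; move: f_size_gt1; move: (size f) => a; lia.
  case: k lt_f_k => [|k] lt_f_k; first by move: lt_f_k; move: (size f) => a; lia.
  have [le_x_k le_f_k] : (size x <= k)%N /\ (size f <= k.+1)%N.
    by move: x_in lt_f_k; rewrite /in_Sf; move: (size f) (size x) => a b; lia.
  by rewrite coefB coefZ coefMX coef_map /= !nth_default ?raddf0 ?mulr0 ?subrr.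
apply: (leq_ltn_trans le_r_f); move: f_size_gt1; move: (size f) => a; lia.
Qed.

Hypothesis f0_unit : f`_0 \is a GRing.unit.

Lemma surjective_of_L_surjective_X : L_surjective sigma f 'X -> surjective_fun sigma.
Proof.
move=> surjX b.
have y_in : in_Sf f (- (b * f`_0))%:P by apply: leq_ltn_trans (size_polyC_leq1 _) _.
have [x x_in eq_y] := surjX _ y_in; have := congr1 (fun p : {poly D} => p`_0) eq_y.
rewrite Sf_mulXl //= coefB coefMX coefZ coefC /= sub0r => /oppr_inj /(mulIr f0_unit) <-.
by exists x`_(size f).-2.
Qed.

Lemma L_surjective_X_of_surjective : surjective_fun sigma -> L_surjective sigma f 'X.
Proof.
move=> sigma_surj y y_in; set c := - (y`_0 / f`_0); set p := y + c *: f.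
have p0 : p`_0 = 0 by rewrite coefD coefZ mulNr divrK // addrN.
have le_p_f : (size p <= size f)%N.
  by apply: leq_trans (size_polyD _ _) _; rewrite geq_max (ltnW y_in) size_scale_leq.
have [x le_x_p eq_x] := map_poly_surjective sigma_surj (drop_poly 1 p).
have x_in : in_Sf f x.
  move: le_x_p le_p_f f_size_gt1; rewrite /in_Sf size_drop_poly.
  by move: (size x) (size p) (size f) => a b d; lia.
exists x => //; rewrite Sf_mulXl // -coef_map eq_x coef_drop_poly.
have -> : ((size f).-2 + 1 = (size f).-1)%N by move: f_size_gt1; move: (size f) => a; lia.
have -> : drop_poly 1 p * 'X = p.
  by apply/polyP => -[|k]; rewrite coefMX coef_drop_poly ?p0 // addn1.
rewrite coefD coefZ coef_monic_last // mulr1 nth_default ?add0r ?addrK //.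
by move: y_in; rewrite /in_Sf; move: (size y) (size f) => a d; lia.
Qed.

End PetitAlgebra.

Theorem mainTheorem7 (D : unitRingType)
    (hD : forall x : D, x != 0 -> x \is a GRing.unit)
    (sigma : {rmorphism D -> D}) (f : {poly D})
    (hmonic : f \is monic) (hm : (2 < size f)%N) (ha0 : f`_0 != 0) :
  (forall j : nat, (0 < j < (size f).-1)%N ->
     (L_surjective sigma f 'X^j <-> surjective_fun sigma))
  /\ (~ surjective_fun sigma -> ~ left_division_algebra sigma f).
Proof.
have f_size_gt1 : (1 < size f)%N by apply: ltn_trans hm.
have f0_unit := hD _ ha0.
split => [[|j] // _ | sigma_not_surj lda]; first split.
- move/(L_surjective_X_of_XSn hmonic).
  exact: surjective_of_L_surjective_X.
- move/(L_surjective_X_of_surjective hmonic f_size_gt1 f0_unit).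
  exact: L_surjective_Xn.
- have X_in : in_Sf f 'X by rewrite /in_Sf size_polyX.
  have [surjX _] := lda 'X X_in (negbT (polyX_eq0 _)).
  exact/sigma_not_surj/(surjective_of_L_surjective_X hmonic f_size_gt1 f0_unit).
Qed.
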